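(* Let $(G,\theta)$ be a $1$-smooth cyclotomic pro-$p$ pair with $G$ torsion-free. If $p=2$, assume in addition that $\mathrm{Im}(\theta) \leq 1+4\mathbb{Z}_2$. Then $G$ is strongly Frattini-resistant.
   Context: $p$ is a prime. A cyclotomic pro-$p$ pair is a pair $(G,\theta)$ with $G$ a pro-$p$ group and $\theta: G\to 1+p\mathbb{Z}_p$ a continuous homomorphism. Let $\mathbb{Z}_p(1)$ denote $\mathbb{Z}_p$ with $G$-action $g\cdot v = \theta(g)v$. The pair is $1$-smooth if for every open subgroup $U$ of $G$ and every $n\in\mathbb{N}$, the quotient map $\mathbb{Z}_p(1)/p^n\mathbb{Z}_p(1)\to \mathbb{Z}_p(1)/p\mathbb{Z}_p(1)$ induces a surjection $H^1(U,\mathbb{Z}_p(1)/p^n\mathbb{Z}_p(1))\to H^1(U,\mathbb{Z}_p(1)/p\mathbb{Z}_p(1))$. Subgroups are closed; $\Phi(H)$ is the Frattini subgroup. A triple $(G,K,H)$ with $H\le K\le G$ is hierarchical if $x\in G$, $x^p\in H$ imply $x\in K$; $G$ is strongly Frattini-resistant if $(G,H,\Phi(H))$ is hierarchical for every subgroup $H$ of $G$. *)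

From HB Require Import structures.
From mathcomp Require Import all_boot all_order all_algebra.
From mathcomp Require Import all_classical all_reals all_analysis.

Set Implicit Arguments.
Unset Strict Implicit.
Unset Printing Implicit Defensive.

Local Open Scope classical_set_scope.

Section ProP.
Variable G : topologicalType.
Variables (mul : G -> G -> G) (inv : G -> G) (one : G).

Definition group_axioms :=
  [/\ forall x y z, mul x (mul y z) = mul (mul x y) z,
      forall x, mul one x = x,
      forall x, mul x one = x,
      forall x, mul (inv x) x = one &
      forall x, mul x (inv x) = one].

Definition topological_group :=
  [/\ group_axioms,
      continuous (fun xy : G * G => mul xy.1 xy.2) &
      continuous inv].

Fixpoint gpow (x : G) (k : nat) : G :=
  if k is k'.+1 then mul (gpow x k') x else one.

Definition is_subgroup (H : set G) :=
  [/\ H one, forall x y, H x -> H y -> H (mul x y) & forall x, H x -> H (inv x)].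

(* subgroups in the sense of the paper: closed subgroups *)
Definition closed_subgroup (H : set G) := is_subgroup H /\ closed H.

Definition normal_in (N : set G) :=
  forall g x, N x -> N (mul (inv g) (mul x g)).

(* N has index p^k in G: there are p^k coset representatives,
   every element lies in exactly one coset r N *)
Definition index_eq (N : set G) (m : nat) :=
  exists f : 'I_m -> G,
    forall x, exists! i : 'I_m, N (mul (inv (f i)) x).

Definition pro_p_group (p : nat) :=
  [/\ topological_group, compact [set: G], hausdorff_space G,
      totally_disconnected [set: G] &
      forall N, is_subgroup N -> open N -> normal_in N ->
        exists k, index_eq N (p ^ k)].

Definition torsion_free :=
  forall x k, (0 < k)%N -> gpow x k = one -> x = one.

Definition open_in (H M : set G) := exists O, open O /\ M = H `&` O.

Definition maximal_open_subgroup (H M : set G) :=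
  [/\ is_subgroup M, M `<=` H, M != H, open_in H M &
      forall K, is_subgroup K -> M `<=` K -> K `<=` H -> K = M \/ K = H].

Definition Frattini (H : set G) : set G :=
  [set x | H x /\ forall M, maximal_open_subgroup H M -> M x].

Definition hierarchical (p : nat) (K H : set G) :=
  forall x, H (gpow x p) -> K x.

Definition strongly_Frattini_resistant (p : nat) :=
  forall H, closed_subgroup H -> hierarchical p H (Frattini H).

(* A continuous homomorphism theta : G -> 1 + p Z_p, with Z_p the inverse
   limit of the Z/p^n; theta g n in [0, p^n) is the residue of theta(g)
   modulo p^n. *)
Definition cyclotomic_character (p : nat) (theta : G -> nat -> nat) :=
  [/\ forall g n, (theta g n < p ^ n)%N,
      forall g n, theta g n = theta g n.+1 %% p ^ n,
      forall g h n, theta (mul g h) n = (theta g n * theta h n) %% p ^ n,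
      forall g n, open [set x | theta x n = theta g n] &
      forall g, theta g 1 = 1%N].

(* continuous 1-cocycles U -> Z_p(1)/p^n Z_p(1), values encoded in [0,p^n) *)
Definition cocycle (p : nat) (theta : G -> nat -> nat) (U : set G) (n : nat)
    (c : G -> nat) :=
  [/\ forall g, U g -> (c g < p ^ n)%N,
      forall g h, U g -> U h ->
        c (mul g h) = (c g + theta g n * c h) %% p ^ n &
      forall g, U g -> exists V, [/\ open V, V g &
        forall x, V x -> U x -> c x = c g]].

(* c1, c2 : U -> Z/p^n differ by a coboundary g |-> g.a - a *)
Definition cohomologous (p : nat) (theta : G -> nat -> nat) (U : set G) (n : nat)
    (c1 c2 : G -> nat) :=
  exists a, (a < p ^ n)%N /\
    forall g, U g -> c1 g = (c2 g + theta g n * a + (p ^ n - a)) %% p ^ n.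

(* H^1(U, Z_p(1)/p^n) -> H^1(U, Z_p(1)/p) is surjective *)
Definition H1_reduction_surjective (p : nat) (theta : G -> nat -> nat)
    (U : set G) (n : nat) :=
  forall c, cocycle p theta U 1 c ->
    exists c', cocycle p theta U n c' /\
      cohomologous p theta U 1 (fun g => c' g %% p) c.

Definition one_smooth (p : nat) (theta : G -> nat -> nat) :=
  forall U, is_subgroup U -> open U ->
    forall n, (0 < n)%N -> H1_reduction_surjective p theta U n.

End ProP.

From Pilot Require Import Defs.
From HB Require Import structures.
From mathcomp Require Import all_boot all_order all_algebra all_fingroup all_solvable.
From mathcomp Require Import all_classical all_reals all_analysis.
From mathcomp Require Import ring.

Set Implicit Arguments.
Unset Strict Implicit.
Unset Printing Implicit Defensive.
Local Open Scope classical_set_scope.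
Import GRing.Theory.

(* Suppose x^p lies in the Frattini subgroup of a closed subgroup H but x does
   not lie in H.  As G is profinite there is an open normal subgroup N with
   xN disjoint from H, and in the finite p-group G/N a maximal subgroup of
   <H N/N, xN> containing H N/N but not xN provides an open subgroup V of G
   containing H and x, and a continuous homomorphism chi : V -> Z/p with
   chi(H) = 0 and chi(x) = 1.  Since theta = 1 mod p, chi is a 1-cocycle with
   values in Z_p(1)/p, and 1-smoothness lifts it to a cocycle c with values
   in Z_p(1)/p^2.  On H, where c = 0 mod p, c is a homomorphism into
   pZ/p^2Z, so its kernel is H or a maximal open subgroup of H, and contains
   the Frattini subgroup of H.  But the cocycle identity gives
   c(x^p) = (1 + theta(x) + ... + theta(x)^(p-1)) c(x) = p mod p^2, because
   theta(x) = 1 mod p, and theta(x) = 1 mod 4 when p = 2.  So x^p is not in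
   the Frattini subgroup of H. *)

Section QuasiComponent.
Variable T : topologicalType.

Definition quasi_component (x : T) : set T :=
  \bigcap_(C in [set C | clopen C /\ C x]) C.

Lemma closed_quasi_component x : closed (quasi_component x).
Proof. by apply: closed_bigI => C [[]]. Qed.

Lemma not_quasi_component_clopen x z :
  ~ quasi_component x z -> exists C, [/\ clopen C, C x & ~ C z].
Proof.
move=> nQz; apply: contrapT => noC; apply: nQz => C [clC Cx].
by apply: contrapT => nCz; apply: noC; exists C.
Qed.

Lemma clopenI_open_separation (D U V : set T) :
  clopen D -> open U -> open V -> U `&` V = set0 -> D `<=` U `|` V -> clopen (D `&` U).
Proof.
move=> [oD clD] oU oV UV0 DUV; split; first exact: openI.
have -> : D `&` U = D `&` ~` V.
  apply/seteqP; split => y [Dy Uy]; split => //.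
    by move=> Vy; have : (U `&` V) y by []; rewrite UV0.
  by case: (DUV y Dy).
by apply: closedI => //; exact: open_closedC.
Qed.

Hypotheses (hT : hausdorff_space T) (cT : compact [set: T]).

Lemma closed_disjoint_open_separation (A B : set T) :
  closed A -> closed B -> A `&` B = set0 ->
  exists U V, [/\ open U, open V, A `<=` U, B `<=` V & U `&` V = set0].
Proof.
move=> clA clB AB0.
have nbhsA : set_nbhs A (~` B).
  apply/set_nbhsP; exists (~` B); split => //; first exact: closed_openC.
  by move=> z Az Bz; have : (A `&` B) z by []; rewrite AB0.
have [W /set_nbhsP [U [oU AU UW]] clWB] := compact_normal hT cT clA nbhsA.
exists U, (~` closure W); split => //.
- exact/closed_openC/closed_closure.
- by move=> z Bz /clWB.
- by apply/seteqP; split => // z [/UW /subset_closure + /(_ _)].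
Qed.

Lemma clopen_sub_of_quasi_component x (W : set T) :
  open W -> quasi_component x `<=` W -> exists D, [/\ clopen D, D x & D `<=` W].
Proof.
move=> oW QW; apply: contrapT => noD.
pose F := filter_from [set D | clopen D /\ D x] (fun D => D `&` ~` W).
have FF : Filter F.
  apply: filter_from_filter; first by exists setT; split => //; exact: clopenT.
  move=> C D [clC Cx] [clD Dx]; exists (C `&` D); first by split; [exact: clopenI|].
  by move=> z [[Cz Dz] nWz].
have PF : ProperFilter F.
  apply: filter_from_proper => // D [clD Dx]; apply/set0P/negP => /eqP DW0.
  apply: noD; exists D; split => // z Dz; apply: contrapT => nWz.
  by rewrite -[False]/(set0 z) -DW0.
have FnW : F (~` W) by exists setT; [split => //; exact: clopenT | move=> z []].
have cnW : compact (~` W) by apply: subclosed_compact cT _ => //; exact: open_closedC.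
have [z [nWz clFz]] := cnW F PF FnW.
apply: nWz; apply: QW => C [clC Cx]; apply: contrapT => nCz.
have nbhsC : nbhs z (~` C) by apply: open_nbhs_nbhs; split => //; case: clC => _ /closed_openC.
have FCW : F (C `&` ~` W) by exists C.
by have [y [[Cy _] nCy]] := clFz _ _ FCW nbhsC.
Qed.

Lemma quasi_component_connected x : connected (quasi_component x).
Proof.
move=> B [b Bb] [W oW BW] [K clK BK].
pose A := quasi_component x `&` ~` W.
have clB : closed B by rewrite BK; apply: closedI => //; exact: closed_quasi_component.
have clA : closed A by apply: closedI; [exact: closed_quasi_component | exact: open_closedC].
have BA0 : B `&` A = set0.
  by apply/seteqP; split => // z [+ [_ nWz]]; rewrite BW => -[].
have [U [V [oU oV BU AV UV0]]] := closed_disjoint_open_separation clB clA BA0.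
have QUV : quasi_component x `<=` U `|` V.
  move=> z Qz; have [Wz|nWz] := pselect (W z); first by left; apply: BU; rewrite BW.
  by right; apply: AV.
have [D [clD Dx DUV]] := clopen_sub_of_quasi_component (openU oU oV) QUV.
have Q_side U' V' : open U' -> open V' -> U' `&` V' = set0 -> D `<=` U' `|` V' ->
    U' x -> quasi_component x `<=` U'.
  move=> oU' oV' UV0' DUV' U'x z Qz.
  have clDU := clopenI_open_separation clD oU' oV' UV0' DUV'.
  by have [] := Qz _ (conj clDU (conj Dx U'x)).
have [Ux|Vx] := DUV x Dx.
- have QU := Q_side U V oU oV UV0 DUV Ux.
  apply/seteqP; split => [z|z Qz]; first by rewrite BW => -[].
  rewrite BW; split => //; apply: contrapT => nWz.
  have : (U `&` V) z by split; [exact: QU | exact: AV].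
  by rewrite UV0.
- rewrite setIC in UV0; rewrite setUC in DUV.
  have QV := Q_side V U oV oU UV0 DUV Vx.
  have Qb : quasi_component x b by move: Bb; rewrite BW => -[].
  have : (V `&` U) b by split; [exact: QV | exact: BU].
  by rewrite UV0.
Qed.

Lemma compact_totally_disconnected_zero_dimensional :
  totally_disconnected [set: T] -> zero_dimensional T.
Proof.
move=> tdT x y xy; apply: not_quasi_component_clopen => Qy.
have : quasi_component x `<=` [set x].
  rewrite -(tdT x) //; apply: connected_component_max => //.
  - by move=> C [clC Cx].
  - exact: quasi_component_connected.
by move=> /(_ y Qy) /= yx; move: xy; rewrite yx eqxx.
Qed.

End QuasiComponent.

Section FiniteCharacter.
Variable gT : finGroupType.
Local Open Scope group_scope.

Lemma maximal_avoiding_exists (H : {group gT}) (x : gT) : x \notin H ->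
  exists W : {group gT}, [/\ H \subset W, x \notin W & maximal W (H <*> <[x]>)].
Proof.
move=> xNH; set L := (H <*> <[x]>)%G.
have xL : x \in L by rewrite -cycle_subG joing_subr.
pose avoid := [pred K : {group gT} | [&& H \subset K, K \subset L & x \notin K]].
have [W maxWavoid _] : {W : {group gT} | maxgroup W avoid & H \subset W}.
  by apply: maxgroup_exists; rewrite inE subxx joing_subl xNH.
have [/and3P [HW WL xNW] maxW] := maxgroupP maxWavoid.
exists W; split => //; apply/maxgroupP; split.
  by rewrite finset.properEneq WL andbT; apply: contraNneq xNW => ->.
move=> K /andP [KL LnK] WK; apply: maxW => //.
rewrite inE (fintype.subset_trans HW WK) KL /=; apply: contra LnK => xK.
by rewrite join_subG (fintype.subset_trans HW WK) cycle_subG.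
Qed.

Lemma index_prime_character (p : nat) (L W : {group gT}) (x : gT) :
    prime p -> normal W L -> #|L : W| = p -> x \in L -> x \notin W ->
  exists chi : gT -> nat,
    [/\ forall l, chi l < p,
        {in L &, forall a b, chi (a * b) = (chi a + chi b) %% p},
        {in W, forall w, chi w = 0%N} & chi x = 1%N].
Proof.
move=> p_pr nWL iWL xL xNW; have nWL' := normal_norm nWL.
pose y := coset W x.
have oy : #[y] = p.
  have : #[y] %| p by rewrite -iWL -card_quotient // order_dvdG // mem_quotient.
  case/primeP: p_pr => _ /[apply] /orP [/eqP oy1|/eqP //].
  case/negP: xNW; apply: coset_idr; first exact: (fintype.subsetP nWL').
  by apply/eqP; rewrite -order_eq1 oy1.
have LWy : L / W = <[y]>.
  apply/eqP; rewrite eq_sym eqEcard cycle_subG mem_quotient //=.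
  by rewrite card_quotient // iWL -oy.
pose chi l := if [pick i : 'I_p | coset W l == y ^+ i] is Some i then val i else 0%N.
have chi_lt l : chi l < p.
  by rewrite /chi; case: pickP => [i _|_]; [exact: ltn_ord | exact: prime_gt0].
have chiP : {in L, forall l, coset W l = y ^+ chi l}.
  move=> l lL; rewrite /chi; case: pickP => [i /eqP //|noi].
  have : coset W l \in <[y]> by rewrite -LWy mem_quotient.
  case/cycleP => i yi; have := noi (Ordinal (ltn_pmod i (prime_gt0 p_pr))).
  by rewrite /= -oy expg_mod_order yi eqxx.
have chiE l i : l \in L -> coset W l = y ^+ i -> chi l = i %% p.
  move=> lL; rewrite chiP // => /eqP; rewrite eq_expg_mod_order oy => /eqP <-.
  by rewrite modn_small.
exists chi; split => //.
- move=> a b aL bL; apply: chiE; first exact: groupM.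
  rewrite (morphM (coset_morphism W)) ?(fintype.subsetP nWL') //=.
  by rewrite !chiP // expgD.
- move=> w wW; rewrite (chiE w 0%N) ?mod0n ?(fintype.subsetP (normal_sub nWL)) //.
  exact: coset_id.
- by rewrite (chiE x 1%N) ?modn_small ?prime_gt1 ?expg1.
Qed.

End FiniteCharacter.

Section SquareZero.
Local Open Scope ring_scope.
Variables (R : comNzRingType) (e : R).
Hypothesis e2 : e * e = 0.

Lemma expr1D_sqr0 n : (1 + e) ^+ n = 1 + e *+ n.
Proof.
elim: n => [|n IHn]; first by rewrite expr0 mulr0n addr0.
by rewrite exprS IHn mulrDl mul1r mulrDr mulr1 mulrnAr e2 mul0rn addr0 mulrSr addrA.
Qed.

Lemma sum_expr1D_sqr0 n : \sum_(j < n) (1 + e) ^+ j = n%:R + e *+ 'C(n, 2).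
Proof.
under eq_bigr => j _ do rewrite expr1D_sqr0.
by rewrite big_split /= sumr_const card_ord sumrMnr -bin2_sum big_mkord.
Qed.

End SquareZero.

Lemma Zp_natr_eq0 (q n : nat) : 1 < q -> (n%:R == 0 :> 'Z_q)%R = (q %| n).
Proof. by move=> q_gt1; rewrite -val_eqE /= val_Zp_nat. Qed.

Section TopologicalGroup.
Variables (G : topologicalType) (mul : G -> G -> G) (inv : G -> G) (one : G).
Hypothesis TG : topological_group mul inv one.
Local Infix "**" := mul (at level 40, left associativity).

Let group_laws : group_axioms mul inv one. Proof. by case: TG. Qed.

Lemma mulA x y z : x ** (y ** z) = x ** y ** z. Proof. by case: group_laws. Qed.
Lemma mul1x x : one ** x = x. Proof. by case: group_laws. Qed.
Lemma mulx1 x : x ** one = x. Proof. by case: group_laws. Qed.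
Lemma mulVx x : inv x ** x = one. Proof. by case: group_laws. Qed.
Lemma mulxV x : x ** inv x = one. Proof. by case: group_laws. Qed.

Lemma mulKx x y : inv x ** (x ** y) = y. Proof. by rewrite mulA mulVx mul1x. Qed.
Lemma mulKVx x y : x ** (inv x ** y) = y. Proof. by rewrite mulA mulxV mul1x. Qed.
Lemma mulxK x y : y ** x ** inv x = y. Proof. by rewrite -mulA mulxV mulx1. Qed.

Lemma mulx_eq1 x y : x ** y = one -> y = inv x.
Proof. by move=> xy1; rewrite -(mulKx x y) xy1 mulx1. Qed.

Lemma invxK x : inv (inv x) = x. Proof. by apply/esym/mulx_eq1; rewrite mulVx. Qed.
Lemma invM x y : inv (x ** y) = inv y ** inv x.
Proof. by apply/esym/mulx_eq1; rewrite mulA mulxK mulxV. Qed.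
Lemma inv1 : inv one = one. Proof. by apply/esym/mulx_eq1; rewrite mul1x. Qed.

Lemma subgroup_gpow (S : set G) x j :
  is_subgroup mul inv one S -> S x -> S (gpow mul one x j).
Proof. by move=> [S1 SM _] Sx; elim: j => [|j IHj] //=; apply: SM. Qed.

Lemma continuousM (T : topologicalType) (f g : T -> G) :
  continuous f -> continuous g -> continuous (fun z => f z ** g z).
Proof.
case: TG => _ mulC _ cf cg z.
by apply: continuous2_cvg; [exact: (mulC (f z, g z)) | exact: cf | exact: cg].
Qed.

Lemma continuousV (T : topologicalType) (f : T -> G) :
  continuous f -> continuous (fun z => inv (f z)).
Proof. by case: TG => _ _ invC cf z; apply: continuous_comp (cf z) (invC _). Qed.

Lemma nbhs_lmul a x (B : set G) : nbhs (a ** x) B -> nbhs x (mul a @^-1` B).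
Proof.
have cst : continuous (fun _ : G => a) by move=> z; apply: cvg_cst.
have : continuous (mul a) by apply: (@continuousM _ (fun=> a) id cst) => z; exact: cvg_id.
exact.
Qed.

Lemma nbhs_subgroup_open (S : set G) :
  is_subgroup mul inv one S -> nbhs one S -> open S.
Proof.
move=> [_ SM _] nS; rewrite openE => g Sg.
have : nbhs (inv g ** g) S by rewrite mulVx.
move=> /nbhs_lmul; apply: filterS => z /= Sgz.
by rewrite -(mulKVx g z); apply: SM.
Qed.

Section FrattiniKernel.
Local Open Scope ring_scope.
Variables (p : nat) (H V : set G) (psi : G -> 'Z_(p ^ 2)).
Hypotheses (p_pr : prime p) (sgH : is_subgroup mul inv one H).
Hypotheses (oV : open V) (HV : H `<=` V).
Hypothesis psi_loc : forall g, V g ->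
  exists U, [/\ open U, U g & forall z, U z -> V z -> psi z = psi g].
Hypothesis psiM : forall g h, H g -> H h -> psi (g ** h) = psi g + psi h.
Hypothesis psi_p : forall h, H h -> exists b : nat, psi h = p%:R * b%:R.

Let H1 : H one. Proof. by case: sgH. Qed.
Let HM g h : H g -> H h -> H (g ** h). Proof. by case: sgH => _ + _; apply. Qed.
Let Hinv h : H h -> H (inv h). Proof. by case: sgH => _ _; apply. Qed.

Let p2_gt1 : (1 < p ^ 2)%N.
Proof. by rewrite (ltn_exp2l 0) // prime_gt1. Qed.

Lemma psi1 : psi one = 0.
Proof. by apply: (addrI (psi one)); rewrite -psiM // mulx1 addr0. Qed.

Lemma psiV h : H h -> psi (inv h) = - psi h.
Proof.
by move=> Hh; apply: (addrI (psi h)); rewrite -psiM ?mulxV ?psi1 ?subrr //; apply: Hinv.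
Qed.

Lemma psiX h j : H h -> psi (gpow mul one h j) = psi h *+ j.
Proof.
move=> Hh; elim: j => [|j IHj] /=; first exact: psi1.
by rewrite psiM ?IHj ?mulrSr //; apply: subgroup_gpow.
Qed.

Let M := H `&` [set g | psi g = 0].

Lemma subgroup_kernel : is_subgroup mul inv one M.
Proof.
split; first by split; [exact: H1 | exact: psi1].
- move=> g h [Hg /= psig] [Hh /= psih].
  by split; [exact: HM | rewrite /= psiM // psig psih addr0].
- by move=> g [Hg /= psig]; split; [exact: Hinv | rewrite /= psiV // psig oppr0].
Qed.

Lemma open_in_kernel : open_in H M.
Proof.
exists [set z | V z /\ psi z = 0]; split; last first.
  by apply/seteqP; split => [g [Hg psig]|g [Hg [_ psig]]]; do ?split => //; exact: HV.
rewrite openE => z [Vz psiz]; have [U [oU Uz psiU]] := psi_loc Vz.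
apply: filterS (open_nbhs_nbhs (conj (openI oU oV) (conj Uz Vz))) => y [Uy Vy].
by split => //; rewrite psiU.
Qed.

Lemma maximal_kernel h0 : H h0 -> psi h0 != 0 -> maximal_open_subgroup mul inv one H M.
Proof.
move=> Hh0 psih0; split.
- exact: subgroup_kernel.
- by move=> g [].
- apply/eqP => MH; have [_ /= /eqP] : M h0 by rewrite MH.
  by rewrite (negbTE psih0).
- exact: open_in_kernel.
move=> K sgK MK KH.
have [[k Kk psik]|noK] := pselect (exists2 k, K k & psi k != 0); last first.
  left; apply/seteqP; split => // g Kg; split; first exact: KH.
  by apply: contrapT => /eqP psig; apply: noK; exists g.
right; apply/seteqP; split => // h Hh.
have [a psika] := psi_p (KH _ Kk); have [b psihb] := psi_p Hh.
have coprime_pa : coprime p a.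
  rewrite prime_coprime //; apply: contra psik => p_a.
  by rewrite psika -natrM (Zp_natr_eq0 _ p2_gt1) expnS expn1 dvdn_pmul2l ?prime_gt0.
(* with u a = -1 mod p, the element k^(u b) h lies in the kernel *)
have [u _] := Bezoutr a (prime_gt0 p_pr); rewrite gcdnC (eqP coprime_pa) => p_ua1.
pose kj := gpow mul one k (u * b).
have Hkj : H kj by apply: subgroup_gpow (KH _ Kk).
have Mkjh : M (kj ** h).
  split; first exact: HM.
  rewrite /= psiM // psiX ?psika ?psihb; last exact: KH.
  rewrite -!natrM -mulrnA -natrD; apply/eqP; rewrite (Zp_natr_eq0 _ p2_gt1).
  have -> : (p * a * (u * b) + p * b = p * (b * (1 + u * a)))%N by ring.
  by rewrite expnS expn1 dvdn_pmul2l ?prime_gt0 // dvdn_mull.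
have [_ KM KV] := sgK.
rewrite -(mulKx kj h); apply: KM; last exact: MK.
by apply: KV; apply: subgroup_gpow.
Qed.

Lemma Frattini_sub_kernel : Defs.Frattini mul inv one H `<=` [set g | psi g = 0].
Proof.
move=> g [Hg FrattHg]; have [[h0 Hh0 psih0]|] := pselect (exists2 h0, H h0 & psi h0 != 0).
  by have [] := FrattHg _ (maximal_kernel Hh0 psih0).
by move=> nopsi; apply: contrapT => /eqP psig; apply: nopsi; exists g.
Qed.

End FrattiniKernel.

Section CocycleModPSquare.
Variables (p : nat) (theta : G -> nat -> nat) (V H : set G) (c : G -> nat) (x : G).
Hypothesis p_pr : prime p.
Hypothesis theta_mod : forall g n, theta g n = theta g n.+1 %% p ^ n.
Hypothesis thetaM : forall g h n, theta (g ** h) n = (theta g n * theta h n) %% p ^ n.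
Hypothesis theta1 : forall g, theta g 1 = 1.
Hypothesis theta2 : p = 2 -> forall g, theta g 2 = 1.
Hypotheses (sgV : is_subgroup mul inv one V) (oV : open V).
Hypotheses (sgH : is_subgroup mul inv one H) (HV : H `<=` V) (Vx : V x).
Hypothesis c_cocycle : cocycle mul p theta V 2 c.
Hypotheses (cH : forall h, H h -> c h %% p = 0) (cx : c x %% p = 1).
Local Open Scope ring_scope.

Let p2_gt1 : (1 < p ^ 2)%N.
Proof. by rewrite (ltn_exp2l 0) // prime_gt1. Qed.

Let P : 'Z_(p ^ 2) := p%:R.
Let C g : 'Z_(p ^ 2) := (c g)%:R.
Let Th g : 'Z_(p ^ 2) := (theta g 2)%:R.

Let PP : P * P = 0.
Proof. by rewrite -natrM; apply/eqP; rewrite Zp_natr_eq0. Qed.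

Let natr_divn_eq n : n%:R = P * (n %/ p)%:R + (n %% p)%:R :> 'Z_(p ^ 2).
Proof. by rewrite {1}(divn_eq n p) natrD natrM mulrC. Qed.

Lemma ThE g : Th g = 1 + P * (theta g 2 %/ p)%:R.
Proof.
have th2p : (theta g 2 %% p = 1)%N by rewrite -[p]expn1 -theta_mod theta1.
by rewrite /Th natr_divn_eq th2p addrC.
Qed.

Lemma ThM g h : Th (g ** h) = Th g * Th h.
Proof. by rewrite /Th thetaM -natrM Zp_nat_mod. Qed.

Let PtPt t : (P * t) * (P * t) = 0.
Proof. by rewrite mulrACA PP mul0r. Qed.

Lemma Th1 : Th one = 1.
Proof.
have := ThM one one; rewrite mulx1 ThE -expr2 (expr1D_sqr0 (PtPt _)) => /addrI.
by rewrite mulr2n => /esym/eqP; rewrite -subr_eq0 addrK => /eqP ->; rewrite addr0.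
Qed.

Lemma ThX g i : Th (gpow mul one g i) = Th g ^+ i.
Proof. by elim: i => [|i IHi] /=; rewrite ?Th1 // ThM IHi exprSr. Qed.

Lemma CM g h : V g -> V h -> C (g ** h) = C g + Th g * C h.
Proof.
by case: c_cocycle => _ cM _ Vg Vh; rewrite /C cM // Zp_nat_mod // natrD natrM.
Qed.

Lemma C1 : C one = 0.
Proof.
have V1 : V one by case: sgV.
have := CM V1 V1; rewrite mulx1 Th1 mul1r => C11.
by apply: (addrI (C one)); rewrite -C11 addr0.
Qed.

Lemma CE_H h : H h -> C h = P * (c h %/ p)%:R.
Proof. by move=> Hh; rewrite /C natr_divn_eq cH // addr0. Qed.

Lemma CM_H g h : H g -> H h -> C (g ** h) = C g + C h.
Proof.
move=> Hg Hh; have Vg := HV Hg; have Vh := HV Hh.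
rewrite CM // ThE (CE_H Hh) mulrDl mul1r.
by rewrite mulrACA PP mul0r addr0.
Qed.

Lemma C_gpow i : C (gpow mul one x i) = (\sum_(j < i) Th x ^+ j) * C x.
Proof.
elim: i => [|i IHi] /=; first by rewrite big_ord0 mul0r C1.
have Vxi := subgroup_gpow i sgV Vx.
by rewrite CM // IHi ThX big_ord_recr mulrDl.
Qed.

Lemma C_gpow_p : C (gpow mul one x p) = P.
Proof.
rewrite C_gpow ThE (sum_expr1D_sqr0 (PtPt _)).
set t := (theta x 2 %/ p)%:R.
(* p divides 'C(p, 2) unless p = 2, where theta = 1 mod 4 is needed instead *)
have -> : (P * t) *+ 'C(p, 2) = 0.
  have [p2|p_neq2] := eqVneq p 2%N.
    by rewrite /t theta2 // divn_small ?prime_gt1 // mulr0 mul0rn.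
  have p_gt2 : (2 < p)%N by rewrite ltn_neqAle eq_sym p_neq2 prime_gt1.
  have /dvdnP [r ->] : (p %| 'C(p, 2))%N by apply: (prime_dvd_bin p_pr); rewrite p_gt2.
  by rewrite mulrnA -mulr_natr mulrnAl mulrAC PP mul0r mul0rn.
by rewrite addr0 /C natr_divn_eq cx mulrDr mulrA PP mul0r add0r mulr1.
Qed.

Lemma not_Frattini_gpow_p : ~ Defs.Frattini mul inv one H (gpow mul one x p).
Proof.
have C_loc g : V g -> exists U, [/\ open U, U g & forall z, U z -> V z -> C z = C g].
  case: c_cocycle => _ _ /[apply] -[U [oU Ug cU]].
  by exists U; split => // z Uz Vz; rewrite /C cU.
have C_Hp h : H h -> exists b : nat, C h = p%:R * b%:R.
  by move=> Hh; exists (c h %/ p)%N; exact: CE_H.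
move=> /(Frattini_sub_kernel p_pr sgH oV HV C_loc CM_H C_Hp) /=.
rewrite C_gpow_p => /eqP; rewrite /P (Zp_natr_eq0 _ p2_gt1) gtnNdvd ?prime_gt0 //.
by rewrite -{1}(expn1 p) ltn_exp2l ?prime_gt1.
Qed.

End CocycleModPSquare.

Hypotheses (cG : compact [set: G]) (hG : hausdorff_space G).
Hypothesis tdG : totally_disconnected [set: G].

Lemma open_subgroup_sub (O : set G) : nbhs one O ->
  exists S, [/\ is_subgroup mul inv one S, open S & S `<=` O].
Proof.
move=> nO.
have [C [C1 clC] CO] := zero_dimensional_cvg hG
  (compact_totally_disconnected_zero_dimensional hG cG tdG) cG nO.
(* tube lemma for the compact set C *)
have stabC : \forall b \near one, forall c, C c -> C (c ** b).
  have /compact_near_coveringP cvC : compact C.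
    by apply: subclosed_compact cG _ => //; case: clC.
  apply: (cvC _ _ (fun b c => C (c ** b))) => c Cc.
  have mulC : continuous (fun xy : G * G => xy.1 ** xy.2) by case: TG.
  apply: (mulC (c, one)); rewrite /= mulx1.
  by case: clC => + _; rewrite openE; apply.
pose S := [set g | forall c, C c -> C (c ** g) /\ C (c ** inv g)].
have sgS : is_subgroup mul inv one S.
  split.
  - by move=> c Cc; rewrite inv1 mulx1.
  - move=> g h Sg Sh c Cc; rewrite mulA invM mulA.
    by split; [exact: (Sh _ (Sg _ Cc).1).1 | exact: (Sg _ (Sh _ Cc).2).2].
  - by move=> g Sg c Cc; rewrite invxK; split; have [] := Sg c Cc.
have stabCV : \forall g \near one, forall c, C c -> C (c ** inv g).
  have invC : continuous inv by case: TG.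
  have : nbhs (inv one) [set b | forall c, C c -> C (c ** b)] by rewrite inv1.
  exact: invC.
exists S; split => //.
- apply: nbhs_subgroup_open => //.
  apply: filterS (filterI stabC stabCV) => g [Cg CVg] c Cc.
  by split; [exact: Cg | exact: CVg].
- by move=> g /(_ one C1) [+ _]; rewrite mul1x; apply: CO.
Qed.

Lemma open_normal_subgroup_sub (O : set G) : nbhs one O ->
  exists N, [/\ is_subgroup mul inv one N, open N, normal_in mul inv N & N `<=` O].
Proof.
move=> nO; have [S [[S1 SM SV] oS SO]] := open_subgroup_sub nO.
(* the normal core of S, which is open by compactness of G *)
pose N := [set z | forall g, S (inv g ** z ** g)].
have sgN : is_subgroup mul inv one N.
  split.
  - by move=> g; rewrite mulx1 mulVx.
  - move=> x y Nx Ny g.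
    have -> : inv g ** (x ** y) ** g = (inv g ** x ** g) ** (inv g ** y ** g).
      by rewrite !mulA mulxK.
    exact: SM.
  - move=> x Nx g; have -> : inv g ** inv x ** g = inv (inv g ** x ** g).
      by rewrite !invM invxK mulA.
    exact: SV.
exists N; split => //.
- apply: nbhs_subgroup_open => //.
  have /compact_near_coveringP cvG := cG.
  have conjC : continuous (fun gz : G * G => inv gz.1 ** gz.2 ** gz.1).
    apply: continuousM; first apply: continuousM.
    + by apply: continuousV => ?; exact: cvg_fst.
    + by move=> ?; exact: cvg_snd.
    + by move=> ?; exact: cvg_fst.
  have : \forall z \near one, [set: G] `<=` (fun g => S (inv g ** z ** g)).
    apply: (cvG _ _ (fun z g => S (inv g ** z ** g))) => g _.
    apply: (conjC (g, one)); rewrite /= mulx1 mulVx.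
    by move: oS; rewrite openE; apply.
  by apply: filterS => z SzG g; apply: SzG.
- move=> g x Nx h; have -> : inv h ** (inv g ** (x ** g)) ** h = inv (g ** h) ** x ** (g ** h).
    by rewrite invM !mulA.
  exact: Nx.
- by move=> z /(_ one); rewrite inv1 mul1x mulx1; apply: SO.
Qed.

Definition mod_p_character (p : nat) (V : set G) (chi : G -> nat) :=
  [/\ forall g, chi g < p,
      forall g h, V g -> V h -> chi (g ** h) = (chi g + chi h) %% p &
      forall g, V g -> exists U, [/\ open U, U g & forall z, U z -> V z -> chi z = chi g]].

Section CosetGroup.
Variables (N : set G) (m : nat) (rep : 'I_m -> G).
Hypotheses (sgN : is_subgroup mul inv one N) (nN : normal_in mul inv N).
Hypothesis repP : forall x, exists! i, N (inv (rep i) ** x).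

Let N1 : N one. Proof. by case: sgN. Qed.
Let NM a b : N a -> N b -> N (a ** b). Proof. by case: sgN => _ + _; apply. Qed.
Let NV a : N a -> N (inv a). Proof. by case: sgN => _ _; apply. Qed.
Let Nconj a b : N a -> N (b ** a ** inv b).
Proof. by move=> /(nN (inv b)); rewrite invxK mulA. Qed.

Let coset_index_ex x : exists i, N (inv (rep i) ** x).
Proof. by have [i []] := repP x; exists i. Qed.

Definition coset_index x : 'I_m := projT1 (cid (coset_index_ex x)).

Lemma coset_indexP x : N (inv (rep (coset_index x)) ** x).
Proof. exact: projT2 (cid (coset_index_ex x)). Qed.

Lemma coset_index_eq x y : coset_index x = coset_index y <-> N (inv x ** y).
Proof.
split => [ExNy|Nxy].
  have := NM (NV (coset_indexP x)) (coset_indexP y).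
  by rewrite ExNy invM invxK !mulA mulxK.
have [i [_ uniq_i]] := repP y.
rewrite -(uniq_i _ (coset_indexP y)); apply/esym/uniq_i.
by have := NM (coset_indexP x) Nxy; rewrite !mulA mulxK.
Qed.

Lemma coset_index_rep i : coset_index (rep i) = i.
Proof.
have [j [_ uniq_j]] := repP (rep i).
have Ni : N (inv (rep i) ** rep i) by rewrite mulVx.
by rewrite -(uniq_j _ (coset_indexP _)) (uniq_j i Ni).
Qed.

(* G/N, realised on the index set of the coset representatives [rep]. *)
Definition GmodN : Type := 'I_m.
Definition projN (x : G) : GmodN := coset_index x.

Let qmul (i j : GmodN) : GmodN := projN (rep i ** rep j).
Let qinv (i : GmodN) : GmodN := projN (inv (rep i)).

Let projNM x y : projN (x ** y) = qmul (projN x) (projN y).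
Proof.
apply/esym/coset_index_eq.
have := NM (Nconj (inv (rep (coset_index y))) (coset_indexP x)) (coset_indexP y).
by rewrite invxK invM !mulA mulxK.
Qed.

Let projNV x : projN (inv x) = qinv (projN x).
Proof.
apply/coset_index_eq; rewrite invxK.
by have := Nconj x (coset_indexP x); rewrite mulA mulxK.
Qed.

Let qmulA : associative qmul.
Proof.
move=> i j k; rewrite -(coset_index_rep i) -(coset_index_rep j) -(coset_index_rep k).
move: (rep i) (rep j) (rep k) => x y z.
by rewrite -[qmul (projN y) _]projNM -[qmul (projN x) (projN y)]projNM -!projNM mulA.
Qed.

Let qmul1 : left_id (projN one) qmul.
Proof. by move=> i; rewrite -(coset_index_rep i) -projNM mul1x. Qed.

Let qmulV : left_inverse (projN one) qinv qmul.
Proof. by move=> i; rewrite -(coset_index_rep i) -projNV -projNM mulVx. Qed.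

HB.instance Definition _ := Finite.on GmodN.
HB.instance Definition _ := Finite_isGroup.Build GmodN qmulA qmul1 qmulV.

Lemma projN_morph x y : projN (x ** y) = (projN x * projN y)%g.
Proof. exact: projNM. Qed.

Lemma projN_inv x : projN (inv x) = (projN x)^-1%g.
Proof. exact: projNV. Qed.

Lemma projN_one : projN one = 1%g.
Proof. by []. Qed.

Lemma card_GmodN : #|{: GmodN}| = m.
Proof. exact: card_ord. Qed.

Lemma coset_character (p k : nat) (H : set G) (x : G) :
    prime p -> m = (p ^ k)%N -> open N -> is_subgroup mul inv one H ->
    (forall h, H h -> ~ N (inv h ** x)) ->
  exists V chi, [/\ is_subgroup mul inv one V, open V, H `<=` V, V x &
    [/\ mod_p_character p V chi, forall h, H h -> chi h = 0%N & chi x = 1%N]].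
Proof.
move=> p_pr mE oN [H1 HM _] HxN.
pose Hb : {set GmodN} := [set i | `[< exists2 h, H h & projN h = i >]]%SET.
have HbP i : reflect (exists2 h, H h & projN h = i) (i \in Hb).
  by rewrite inE; exact: asboolP.
have Hb_group : group_set Hb.
  apply/group_setP; split; first by apply/HbP; exists one.
  move=> _ _ /HbP [g Hg <-] /HbP [h Hh <-]; apply/HbP.
  by exists (g ** h); [exact: HM | exact: projN_morph].
have xNHb : projN x \notin Hb.
  by apply/HbP => -[h Hh /coset_index_eq]; exact: HxN.
have [W [HbW xNW maxW]] := @maximal_avoiding_exists _ (Group Hb_group) _ xNHb.
set L := (Group Hb_group <*> <[projN x]>)%G in maxW.
have pL : (p.-group L)%g.
  apply: pgroupS (finset.subsetT L) _.
  by rewrite /pgroup cardsT card_GmodN mE pnatX pnat_id.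
have xL : projN x \in L by rewrite -cycle_subG joing_subr.
have [chi [chi_lt chiM chiW chix]] := index_prime_character p_pr
  (p_maximal_normal pL maxW) (p_maximal_index pL maxW) xL xNW.
have sgV : is_subgroup mul inv one [set g | projN g \in L].
  split => /=; first by rewrite projN_one group1.
  + by move=> a b aL bL; rewrite projN_morph groupM.
  + by move=> a aL; rewrite projN_inv groupV.
have nbhs_lN a : nbhs a (mul (inv a) @^-1` N).
  by apply: nbhs_lmul; rewrite mulVx; move: oN; rewrite openE; apply.
exists [set g | projN g \in L], (chi \o projN); split => //=.
- apply: nbhs_subgroup_open => //; apply: filterS (nbhs_lN one) => n /= Nn.
  have <- : projN one = projN n by apply/coset_index_eq.
  exact: group1.
- move=> h Hh; apply: (fintype.subsetP (joing_subl _ _)).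
  by apply/HbP; exists h.
- split => //.
  + split => [g|a b aL bL|g _]; first exact: chi_lt.
      by rewrite /= projN_morph chiM.
    exists (mul (inv g) @^-1` N); split => //.
    * rewrite openE => z Ngz; apply: filterS (nbhs_lN z) => y /= Nzy.
      by rewrite -(mulKVx z y) mulA; apply: NM.
    * by rewrite /= mulVx.
    * by move=> z /coset_index_eq gz _ /=; rewrite /projN gz.
  + by move=> h Hh; apply: chiW; apply: (fintype.subsetP HbW); apply/HbP; exists h.
Qed.

End CosetGroup.

Lemma exists_separating_character (p : nat) (H : set G) (x : G) :
    prime p ->
    (forall N, is_subgroup mul inv one N -> open N -> normal_in mul inv N ->
      exists k, index_eq mul inv N (p ^ k)) ->
    closed_subgroup mul inv one H -> ~ H x ->
  exists V chi, [/\ is_subgroup mul inv one V, open V, H `<=` V, V x &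
    [/\ mod_p_character p V chi, forall h, H h -> chi h = 0%N & chi x = 1%N]].
Proof.
move=> p_pr p_index [sgH clH] HNx.
have nbhsO : nbhs one [set n | ~ H (x ** inv n)].
  have invC : continuous inv by case: TG.
  have : nbhs (inv one) (mul x @^-1` (~` H)).
    apply: nbhs_lmul; rewrite inv1 mulx1.
    by move: (closed_openC clH); rewrite openE; apply.
  exact: invC.
have [N [sgN oN nN NO]] := open_normal_subgroup_sub nbhsO.
have [k [rep repP]] := p_index N sgN oN nN.
apply: (coset_character sgN nN repP p_pr erefl oN sgH) => h Hh /NO /=.
by rewrite invM invxK mulKVx.
Qed.

End TopologicalGroup.

Section CocycleLevelOne.
Variables (G : topologicalType) (mul : G -> G -> G) (p : nat).
Variables (theta : G -> nat -> nat) (V : set G).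
Hypothesis theta1 : forall g, theta g 1 = 1%N.

Lemma mod_p_character_cocycle chi :
  mod_p_character mul p V chi -> cocycle mul p theta V 1 chi.
Proof.
case=> chi_lt chiM chi_loc; split => // g h Vg Vh.
by rewrite theta1 mul1n expn1 chiM.
Qed.

Lemma cohomologous1_eq c1 c2 : (forall g, c2 g < p) ->
  cohomologous p theta V 1 c1 c2 -> forall g, V g -> c1 g = c2 g.
Proof.
move=> c2_lt [a []]; rewrite expn1 => a_lt c12 g Vg.
by rewrite c12 // theta1 mul1n -addnA subnKC ?(ltnW a_lt) // modnDr modn_small.
Qed.

End CocycleLevelOne.

Theorem mainTheorem10 (p : nat) (G : topologicalType)
    (mul : G -> G -> G) (inv : G -> G) (one : G)
    (theta : G -> nat -> nat) :
  prime p ->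
  pro_p_group mul inv one p ->
  cyclotomic_character mul p theta ->
  one_smooth mul inv one p theta ->
  torsion_free mul one ->
  (p = 2%N -> forall g, theta g 2 = 1%N) ->
  strongly_Frattini_resistant mul inv one p.
Proof.
move=> p_pr [TG cG hG tdG p_index] [_ theta_mod thetaM _ theta1] smooth _ theta2.
move=> H clH x Fxp; apply: contrapT => HNx.
have [V [chi [sgV oV HV Vx [chi_char chiH chix]]]] :=
  exists_separating_character TG cG hG tdG p_pr p_index clH HNx.
have [c [c_cocycle c_coh]] :=
  smooth V sgV oV 2 erefl chi (mod_p_character_cocycle theta1 chi_char).
have c_chi g : V g -> c g %% p = chi g.
  apply: (cohomologous1_eq theta1 _ c_coh); by case: chi_char.
have [sgH _] := clH.
apply: (not_Frattini_gpow_p TG p_pr theta_mod thetaM theta1 theta2 sgV oV sgH HV Vx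
  c_cocycle _ _ Fxp).
- by move=> h Hh; rewrite c_chi ?chiH //; apply: HV.
- by rewrite c_chi.
Qed.
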